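(* For all integers $k \geq 2$ and $n \geq 2k+3$, \[\iota(B_{n,C(k)}, \{K_{1,k}\}) = \left\lfloor \frac{2n}{2k+3} \right\rfloor.\]
   Context: Graphs are finite and simple. For $D \subseteq V(G)$, $N[D]$ is the union of closed neighbourhoods of vertices of $D$; $D$ is $\{K_{1,k}\}$-isolating if $G - N[D]$ contains no copy of the star $K_{1,k}$ (equivalently has maximum degree less than $k$), and $\iota(G,\{K_{1,k}\})$ is the minimum size of such a set. Define $\mathrm{mod}^*$ as the usual modulo operation except that $ba \ \mathrm{mod}^*\ a = a$ (instead of $0$). For $2 \le r < m$ (and similarly for $r \geq 1$), $C_m^r$ is the graph on $[m]$ with edges $\{i, (i+j) \ \mathrm{mod}^*\ m\}$ for $i \in [m]$, $j \in [r]$. For $k \geq 2$: if $k$ is even, $C(k) = C_{2k+2}^{k/2}$; if $k$ is odd, $C(k)$ has vertex set $[2k+2]$ and edge set $E(C_{2k+2}^{(k-1)/2}) \cup \{\{i, i+\frac{k+1}{2}\} : i \in [\frac{k+1}{2}] \cup ([k+1+\frac{k+1}{2}] \setminus [k+1])\}$. For $n \geq 2k+3$, $B_{n,C(k)}$ is defined as follows. Let $q = \lfloor n/(2k+3) \rfloor$ and $n = q(2k+3)+r$ with $0 \le r \le 2k+2$. Let $u_1,\dots,u_{q+r}$ be new vertices. Let $R$ be the empty graph if $r \le 1$, and if $r \ge 2$ let $R$ be the graph with vertex set $\{u_{q+j} : j \in [r]\}$ and edge set $\{u_{q+r}u_{q+j} : j \in [r-1]\}$. Let $G_1,\dots,G_q$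 be pairwise disjoint copies of $C(k)$ (disjoint from the $u$'s), with $v_{i,1},\dots,v_{i,2k+2}$ the vertices of $G_i$ corresponding to $1,\dots,2k+2$. Let $t = \min\{1,r\}$. Then $B_{n,C(k)}$ has vertex set $\{u_1,\dots,u_{q+r}\} \cup \bigcup_{i=1}^q V(G_i)$ and edge set $\{u_iv_{i,1} : i \in [q]\} \cup \{u_iu_{i+1} : i \in [q+t-1]\} \cup E(R) \cup \bigcup_{i=1}^q E(G_i)$. *)

From mathcomp Require Import all_boot.
Set Implicit Arguments. Unset Strict Implicit. Unset Printing Implicit Defensive.

Definition closed_nbhd (T : finType) (adj : rel T) (D : {set T}) : {set T} :=
  [set v | (v \in D) || [exists d in D, adj d v]].

Definition has_star_outside (T : finType) (adj : rel T) (k : nat) (X : {set T}) : bool :=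
  [exists v : T, exists S : {set T},
     [&& v \notin X, v \notin S, #|S| == k,
         [disjoint S & X] & [forall w in S, adj v w]]].

Definition isolating (T : finType) (adj : rel T) (k : nat) (D : {set T}) : bool :=
  ~~ has_star_outside adj k (closed_nbhd adj D).

(* iota(G, {K_{1,k}}) : minimum size of an isolating set (V itself is isolating) *)
Definition iota_star (T : finType) (adj : rel T) (k : nat) : nat :=
  \big[minn/#|T|]_(D : {set T} | isolating adj k D) #|D|.

Definition modstar (a m : nat) : nat := if a %% m == 0 then m else a %% m.

Definition Cpow_adj (m r x y : nat) : bool :=
  has (fun i => has (fun j =>
     ((x == i) && (y == modstar (i + j) m)) ||
     ((y == i) && (x == modstar (i + j) m))) (iota 1 r)) (iota 1 m).

Definition Cextra_edge (k i j : nat) : bool :=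
  let h := (k.+1)./2 in
  [&& ((1 <= i <= h) || (k + 2 <= i <= k + 1 + h)) & j == i + h].

Definition Ck_adj (k x y : nat) : bool :=
  if odd k then
    Cpow_adj (2 * k + 2) ((k - 1)./2) x y || Cextra_edge k x y || Cextra_edge k y x
  else Cpow_adj (2 * k + 2) (k./2) x y.

Definition Bq (n k : nat) : nat := n %/ (2 * k + 3).
Definition Br (n k : nat) : nat := n %% (2 * k + 3).

(* inl a  stands for u_{a+1};  inr (i, x) stands for v_{i+1, x+1} *)
Definition Bvert (n k : nat) : finType :=
  ('I_(Bq n k + Br n k) + ('I_(Bq n k) * 'I_(2 * k + 2)))%type.

(* edges among the u's, on 1-based labels a b:
   u_i u_{i+1} for i in [q+t-1], and E(R) = u_{q+r} u_{q+j}, j in [r-1] if r >= 2 *)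
Definition u_edge (q r a b : nat) : bool :=
  let t := minn 1 r in
  [&& 1 <= a, a <= q + t - 1 & b == a.+1] ||
  [&& 2 <= r, a == q + r & (q + 1 <= b <= q + r - 1)].

Definition Badj (n k : nat) : rel (Bvert n k) :=
  fun x y =>
    match x, y with
    | inl a, inl b => u_edge (Bq n k) (Br n k) a.+1 b.+1 || u_edge (Bq n k) (Br n k) b.+1 a.+1
    | inl a, inr (i, v) => (nat_of_ord a == nat_of_ord i) && (nat_of_ord v == 0)
    | inr (i, v), inl a => (nat_of_ord a == nat_of_ord i) && (nat_of_ord v == 0)
    | inr (i, v), inr (j, w) => (i == j) && Ck_adj k v.+1 w.+1
    end.

From mathcomp Require Import all_boot order zify.
Import Order.TTheory.

Set Implicit Arguments.
Unset Strict Implicit.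
Unset Printing Implicit Defensive.

(* Write q = n %/ (2k+3) and r = n %% (2k+3), so that (2n) %/ (2k+3) = 2q + [r >= k+2].
   Lower bound: let D be isolating. Each block {u_i} u V(G_i) contains at least two vertices of D.
   Otherwise D dominates inside G_i at most the closed neighbourhood of one vertex a of
   C(k) (u_i only dominates v_{i,1}), while the antipode of a in C(k) is the centre of a
   K_{1,k} avoiding N[a]. If r >= k+2, D also meets the tail u_{q+1}, ..., u_{q+r}, or else
   u_{q+r} is the centre of a K_{1,k} whose leaves are u_{q+2}, ..., u_{q+k+1}.
   Upper bound: u_1, ..., u_q, the vertices v_{i,k+2} antipodal to v_{i,1}, and u_{q+r}
   when r >= k+2 form an isolating set, because every remaining vertex has at most k
   remaining vertices in its closed neighbourhood. *)

Section IsolatingSets.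
Variables (T : finType) (adj : rel T) (k : nat).

Lemma iota_star_le (D : {set T}) : isolating adj k D -> iota_star adj k <= #|D|.
Proof.
move=> isoD; rewrite /iota_star -minEnat.
exact: (bigmin_le_cond _ (fun E : {set T} => #|E|) isoD).
Qed.

Lemma iota_star_ge N :
  N <= #|T| -> (forall D, isolating adj k D -> N <= #|D|) -> N <= iota_star adj k.
Proof.
move=> NT lbD; apply: (big_ind (fun m => N <= m)) => // a b Na Nb.
by rewrite leq_min Na Nb.
Qed.

Lemma closed_nbhdPn (D : {set T}) x :
  reflect (x \notin D /\ {in D, forall d, ~~ adj d x}) (x \notin closed_nbhd adj D).
Proof.
rewrite inE negb_or; apply: (iffP andP) => -[xD nadj]; split=> //.
  by move=> d dD; apply: contra nadj => adx; apply/existsP; exists d; rewrite dD.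
by apply/existsPn => d; apply/andP => -[dD]; apply/negP; apply: nadj.
Qed.

Lemma has_star_outsideI (X S : {set T}) v :
  v \notin X -> v \notin S -> #|S| = k -> [disjoint S & X] -> {in S, forall w, adj v w} ->
  has_star_outside adj k X.
Proof.
move=> vX vS Sk SX Sadj; apply/existsP; exists v; apply/existsP; exists S.
by rewrite vX vS Sk eqxx SX; apply/forallP => w; apply/implyP => /Sadj.
Qed.

Lemma no_star_outside_small_nbhd (X : {set T}) :
  (forall v, v \notin X -> #|[set w | w \notin X & (w == v) || adj v w]| <= k) ->
  ~~ has_star_outside adj k X.
Proof.
move=> small; apply/existsP => -[v /existsP[S /and5P[vX vS /eqP Sk SX /forallP Sadj]]].
have : #|v |: S| <= k.
  apply: leq_trans (small v vX); apply: subset_leq_card; apply/subsetP => w.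
  rewrite in_setU1 inE => /predU1P[-> | wS]; first by rewrite vX eqxx.
  by rewrite (disjointFr SX wS) (implyP (Sadj w) wS) orbT.
by rewrite cardsU1 vS Sk ltnn.
Qed.

End IsolatingSets.

Lemma has_star_outside_inj (T' T : finType) (adj' : rel T') (adj : rel T) (f : T' -> T) k
    (X' : {set T'}) (X : {set T}) :
  injective f -> (forall x y, adj' x y -> adj (f x) (f y)) ->
  (forall x, f x \in X -> x \in X') -> has_star_outside adj' k X' -> has_star_outside adj k X.
Proof.
move=> f_inj f_adj f_X /existsP[v /existsP[S /and5P[vX vS /eqP Sk SX /forallP Sadj]]].
apply: (has_star_outsideI (v := f v) (S := f @: S)).
- by apply: contra vX => /f_X.
- by rewrite mem_imset.
- by rewrite card_imset.
- rewrite disjoint_subset; apply/subsetP => _ /imsetP[w wS ->]; rewrite inE.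
  by apply: contraFN (disjointFr SX wS) => /f_X.
- by move=> _ /imsetP[w wS ->]; apply/f_adj/(implyP (Sadj w)).
Qed.

Lemma card_ord_le_size m (A : {set 'I_m}) (s : seq nat) :
  {in A, forall i : 'I_m, (i : nat) \in s} -> #|A| <= size s.
Proof.
move=> As; rewrite cardE -(size_map val) uniq_leq_size ?(map_inj_uniq val_inj) ?enum_uniq //.
by move=> u /mapP[i]; rewrite mem_enum => /As si ->.
Qed.

Lemma card_ord_in_seq m (s : seq nat) :
  uniq s -> all (fun i => i < m) s -> #|[set i : 'I_m | (i : nat) \in s]| = size s.
Proof.
move=> us /allP sm; rewrite cardE -(size_map val); apply/perm_size/uniq_perm => //.
  by rewrite (map_inj_uniq val_inj) enum_uniq.
move=> i; apply/mapP/idP => [[j] | si]; first by rewrite mem_enum inE => ? ->.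
by exists (Ordinal (sm i si)); rewrite // mem_enum inE.
Qed.

Lemma card_le1_const (T : finType) (U : Type) (f : T -> U) (B : {set T}) (u0 : U) :
  #|B| <= 1 -> exists a, {in B, forall x, f x = a}.
Proof.
move=> /card_le1_eqP B1; case: (set_0Vmem B) => [-> | [x xB]].
  by exists u0 => y; rewrite inE.
by exists (f x) => y yB; rewrite (B1 y x).
Qed.

Lemma cards_sum (A B : finType) (X : {set A + B}) :
  #|X| = #|[set a | inl a \in X]| + #|[set b | inr b \in X]|.
Proof. by rewrite -!sum1_card big_sumType; congr (_ + _); apply: eq_bigl => ?; rewrite inE. Qed.

Lemma divn_double n d : 0 < d -> (2 * n) %/ d = 2 * (n %/ d) + (d <= 2 * (n %% d)).
Proof.
move=> d0; rewrite {1}(divn_eq n d) mulnDr mulnA divnMDl //; apply: congr1.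
have := ltn_pmod n d0; case: (leqP d (2 * (n %% d))) => [d_le | d_gt] r_lt; last first.
  by rewrite divn_small.
have -> : 2 * (n %% d) = 1 * d + (2 * (n %% d) - d) by lia.
by rewrite divnMDl // divn_small //; lia.
Qed.

(* For a, b < m: the circular distance between a and b in Z_m lies in [1, r]. *)
Definition circ_adj m r a b :=
  [|| (a < b) && (b <= a + r), (b < a) && (a <= b + r), a + m <= b + r | b + m <= a + r].

Lemma modstarE s m : 0 < s < m + m -> modstar s m = if s <= m then s else s - m.
Proof.
move=> /andP[s0 sm]; rewrite /modstar; case: (ltngtP s m) => [s_lt | s_gt | ->].
- by rewrite modn_small //; case: eqP s0 => // ->.
- rewrite -(subnK (ltnW s_gt)) modnDr modn_small; last by lia.
  by case: eqP => //; lia.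
- by rewrite modnn.
Qed.

Lemma Cpow_adjC m r x y : Cpow_adj m r x y = Cpow_adj m r y x.
Proof. by apply: eq_has => i; apply: eq_has => j; rewrite orbC. Qed.

Lemma Cpow_adj_shift m r x y j :
  r < m -> x < m -> y < m -> 0 < j <= r -> (x + j == y) || (x + j == y + m) ->
  Cpow_adj m r x.+1 y.+1.
Proof.
move=> rm xm ym j_in xjy; apply/hasP; exists x.+1; first by rewrite mem_iota; lia.
apply/hasP; exists j; first by rewrite mem_iota; lia.
by rewrite eqxx modstarE; [case: ifP; lia | lia].
Qed.

Lemma Cpow_adjE m r a b :
  r < m -> a < m -> b < m -> Cpow_adj m r a.+1 b.+1 = circ_adj m r a b.
Proof.
move=> rm am bm; apply/idP/idP => [/hasP[i + /hasP[j]] | ab].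
  rewrite !mem_iota => i_in j_in.
  by rewrite modstarE; [case: ifP; rewrite /circ_adj; lia | lia].
case/or4P: ab => ab.
- by apply: (Cpow_adj_shift (j := b - a)); lia.
- by rewrite Cpow_adjC; apply: (Cpow_adj_shift (j := a - b)); lia.
- by rewrite Cpow_adjC; apply: (Cpow_adj_shift (j := a + m - b)); lia.
- by apply: (Cpow_adj_shift (j := b + m - a)); lia.
Qed.

(* C(k) relabelled on the positions 0, ..., 2k+1: position a is the vertex a+1. *)
Definition cadj k a b := Ck_adj k a.+1 b.+1.
Definition cnbhd k a b := (b == a) || cadj k a b.

(* The extra edges of C(2H+1) in positions: a perfect matching pairing each position of
   [0, H] u [2H+2, 3H+2] with its successor at distance H+1. *)
Definition matched H a b := ((a <= H) || (2 * H + 2 <= a <= 3 * H + 2)) && (b == a + H + 1).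

Lemma even_or_odd k : 2 <= k ->
  (exists2 H, 1 <= H & k = 2 * H) \/ (exists2 H, 1 <= H & k = 2 * H + 1).
Proof.
move=> k2; have kE := odd_double_half k; case: (odd k) kE => /= kE.
  by right; exists k./2; lia.
by left; exists k./2; lia.
Qed.

Lemma cadj_even H a b : 1 <= H -> a < 2 * (2 * H) + 2 -> b < 2 * (2 * H) + 2 ->
  cadj (2 * H) a b = circ_adj (2 * (2 * H) + 2) H a b.
Proof.
move=> H1 am bm; rewrite /cadj /Ck_adj.
have -> : odd (2 * H) = false by lia.
have -> : (2 * H)./2 = H by lia.
by rewrite Cpow_adjE //; lia.
Qed.

Lemma cadj_odd H a b : 1 <= H -> a < 2 * (2 * H + 1) + 2 -> b < 2 * (2 * H + 1) + 2 ->
  cadj (2 * H + 1) a b =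
  [|| circ_adj (2 * (2 * H + 1) + 2) H a b, matched H a b | matched H b a].
Proof.
move=> H1 am bm; rewrite /cadj /Ck_adj.
have -> : odd (2 * H + 1) by lia.
have -> : (2 * H + 1 - 1)./2 = H by lia.
rewrite Cpow_adjE; try lia.
by rewrite /Cextra_edge /matched -!orbA; congr [|| _, _ | _]; apply/idP/idP; lia.
Qed.

Definition addmod m y d := if y + d < m then y + d else y + d - m.

Variant addmod_spec m y d : nat -> Type :=
  | AddmodSmall of y + d < m : addmod_spec m y d (y + d)
  | AddmodWrap of m <= y + d : addmod_spec m y d (y + d - m).

Lemma addmodP m y d : addmod_spec m y d (addmod m y d).
Proof. by rewrite /addmod; case: ltnP => h; constructor. Qed.

Lemma addmod_lt m y d : y < m -> d < m -> addmod m y d < m.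
Proof. by case: addmodP; lia. Qed.

Definition antipode k a := addmod (2 * k + 2) a (k + 1).

(* Offsets, taken mod 2k+2, from y to its neighbours; for odd k, partner_offset leads to the
   partner of y in the extra matching. *)
Definition partner_offset k y :=
  let H := k./2 in if (y <= H) || (2 * H + 2 <= y <= 3 * H + 2) then H + 1 else 3 * H + 3.

Definition nbr_offsets k y :=
  iota 1 k./2 ++ nseq (odd k) (partner_offset k y) ++ iota (2 * k + 2 - k./2) k./2.

Definition nbrs k y := [seq addmod (2 * k + 2) y d | d <- nbr_offsets k y].

Lemma mem_nbr_offsets k y d :
  d \in nbr_offsets k y =
  [|| 0 < d <= k./2, odd k && (d == partner_offset k y) | 2 * k + 2 - k./2 <= d < 2 * k + 2].
Proof. by rewrite !mem_cat !mem_iota mem_nseq; congr [|| _, _ | _]; lia. Qed.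

Lemma partner_offset_bound k y : odd k -> k./2 < partner_offset k y < 2 * k + 2 - k./2.
Proof. by rewrite /partner_offset; case: ifP; lia. Qed.

Lemma nbr_offsets_bound k y d : d \in nbr_offsets k y -> 0 < d < 2 * k + 2.
Proof.
rewrite mem_nbr_offsets; case: (boolP (odd k)) => [ok | _]; last by lia.
by have := partner_offset_bound y ok; lia.
Qed.

Lemma nbr_offsets_uniq k y : uniq (nbr_offsets k y).
Proof.
rewrite /nbr_offsets; case: (boolP (odd k)) => [ok | _] /=; last first.
  by rewrite cat_uniq !iota_uniq andbT; apply/hasPn => d; rewrite !mem_iota; lia.
have := partner_offset_bound y ok.
rewrite cat_uniq cons_uniq !iota_uniq mem_iota andbT /= => p_bound.
rewrite mem_iota negb_or -andbA; apply/and3P; split; try lia.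
by apply/hasPn => d; rewrite !mem_iota; lia.
Qed.

Lemma nbrs_uniq k y : uniq (nbrs k y).
Proof.
rewrite map_inj_in_uniq ?nbr_offsets_uniq // => d1 d2 /nbr_offsets_bound d1_lt.
by move/nbr_offsets_bound; case: addmodP; case: addmodP; lia.
Qed.

Lemma size_nbrs k y : size (nbrs k y) = k.
Proof. by rewrite size_map !size_cat !size_iota size_nseq; lia. Qed.

Lemma antipode_lt k a : a < 2 * k + 2 -> antipode k a < 2 * k + 2.
Proof. by move=> am; apply: addmod_lt; lia. Qed.

Lemma antipode_off_nbhd k a : 2 <= k -> a < 2 * k + 2 -> ~~ cnbhd k a (antipode k a).
Proof.
move=> k2 am; have := antipode_lt am; rewrite /cnbhd /antipode.
case: (even_or_odd k2) => -[H H1 kE] y_lt; subst k.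
- by rewrite cadj_even // /circ_adj; move: y_lt; case: addmodP; lia.
- by rewrite cadj_odd // /circ_adj /matched; move: y_lt; case: addmodP; lia.
Qed.

(* The antipode y of a is at circular distance k+1 from a. A circle neighbour of y is at
   distance at least k+1-k/2 from a, too far to be adjacent to a; for odd k, the extra
   neighbour of y is at distance k/2+1 from a, but it is matched to y, not to a. *)
Lemma nbrs_antipode k a w : 2 <= k -> a < 2 * k + 2 -> w \in nbrs k (antipode k a) ->
  [/\ w < 2 * k + 2, w != antipode k a, cadj k (antipode k a) w & ~~ cnbhd k a w].
Proof.
move=> k2 am /mapP[d d_in ->]; have y_lt := antipode_lt am.
have w_lt : addmod (2 * k + 2) (antipode k a) d < 2 * k + 2.
  by apply: addmod_lt; have := nbr_offsets_bound d_in; lia.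
move: d_in y_lt w_lt; rewrite mem_nbr_offsets /cnbhd.
case: (even_or_odd k2) => -[H H1 kE] d_in y_lt w_lt; subst k.
- rewrite !cadj_even //; move: d_in y_lt w_lt; rewrite /antipode /circ_adj.
  by case: addmodP; case: addmodP => *; split; lia.
- rewrite !cadj_odd //; move: d_in y_lt w_lt.
  rewrite /antipode /partner_offset /circ_adj /matched.
  by case: addmodP; case: addmodP; case: ifP => *; split; lia.
Qed.

Definition Ck_graph k : rel 'I_(2 * k + 2) := fun a b => cadj k a b.
Arguments Ck_graph : clear implicits.

Lemma Ck_star_off_nbhd k a : 2 <= k -> a < 2 * k + 2 ->
  has_star_outside (Ck_graph k) k [set b : 'I_(2 * k + 2) | cnbhd k a b].
Proof.
move=> k2 am; have leaf := nbrs_antipode k2 am.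
apply: (has_star_outsideI (v := Ordinal (antipode_lt am))
          (S := [set w : 'I_(2 * k + 2) | (w : nat) \in nbrs k (antipode k a)])).
- by rewrite inE antipode_off_nbhd.
- by rewrite inE; apply/negP => /leaf[]; rewrite eqxx.
- by rewrite card_ord_in_seq ?size_nbrs ?nbrs_uniq //; apply/allP => w /leaf[].
- by rewrite disjoint_subset; apply/subsetP => w; rewrite !inE => /leaf[].
- by move=> w; rewrite inE => /leaf[].
Qed.

Lemma Ck_off_antipodal_pair k : 2 <= k ->
  #|[set b : 'I_(2 * k + 2) | (b != 0 :> nat) && ~~ cnbhd k (k + 1) b]| <= k.
Proof.
move=> k2; case: (even_or_odd k2) => -[H H1 kE]; subst k.
- apply: (@leq_trans (size (iota 1 H ++ iota (3 * H + 2) H))).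
    apply: card_ord_le_size => b; have b_lt := ltn_ord b.
    by rewrite inE mem_cat !mem_iota /cnbhd cadj_even // /circ_adj; lia.
  by rewrite size_cat !size_iota; lia.
- apply: (@leq_trans (size (iota 1 (H + 1) ++ iota (3 * H + 4) H))).
    apply: card_ord_le_size => b; have b_lt := ltn_ord b.
    by rewrite inE mem_cat !mem_iota /cnbhd cadj_odd // /circ_adj /matched; lia.
  by rewrite size_cat !size_iota; lia.
Qed.

Section BGraph.

Variables n k : nat.
Hypotheses (k_ge2 : 2 <= k) (q_gt0 : 0 < Bq n k).

Local Notation q := (Bq n k).
Local Notation r := (Br n k).
Local Notation V := (Bvert n k).
Local Notation adj := (@Badj n k).

(* Block i < q is {u_(i+1)} u V(G_(i+1)); block q is the tail u_(q+1), ..., u_(q+r). *)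
Definition block (x : V) : 'I_q.+1 :=
  inord (match x with inl c => minn c q | inr (i, _) => nat_of_ord i end).

Lemma block_inl c : block (inl c) = minn c q :> nat.
Proof. by rewrite inordK // ltnS geq_minr. Qed.

Lemma block_inr i b : block (inr (i, b)) = i :> nat.
Proof. by rewrite inordK // ltnS ltnW. Qed.

(* The position in C(k) of a vertex of a block; u_i counts as position 0, since v_{i,1} is
   its only neighbour in G_i. *)
Definition position_u : 'I_(2 * k + 2) := Ordinal (ltn_addl (2 * k) (ltn0Sn 1)).

Definition position (x : V) : 'I_(2 * k + 2) := if x is inr (_, b) then b else position_u.

Lemma block_card_ge2 (D : {set V}) (j : 'I_q) :
  isolating adj k D -> 1 < #|[set x in D | block x == widen_ord (leqnSn q) j]|.
Proof.
move=> isoD; rewrite ltnNge; apply/negP => /(card_le1_const position position_u)[a a_pos].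
have pos_a x : x \in D -> block x = j :> nat -> position x = a.
  by move=> xD xj; apply: a_pos; rewrite inE xD; apply/eqP/val_inj.
move/negP: isoD; apply.
apply: (has_star_outside_inj (f := fun b => inr (j, b)) _ _ _
          (Ck_star_off_nbhd k_ge2 (ltn_ord a))).
- by move=> b1 b2 [].
- by move=> b1 b2 /= ab; rewrite eqxx.
move=> b; rewrite !inE => /orP[bD | /existsP[[c | [i b']] /andP[dD db]]].
- have -> : a = b by rewrite -(pos_a _ bD) // block_inr.
  by rewrite /cnbhd eqxx.
- move: db => /= /andP[/eqP cj /eqP b0].
  have <- : position (inl c) = a.
    by apply: pos_a; rewrite // block_inl -cj; apply/minn_idPl; rewrite cj ltnW.
  by apply/orP; left; apply/eqP.
- move: db => /= /andP[/eqP ij ab].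
  have <- : position (inr (i, b')) = a by apply: pos_a; rewrite // block_inr ij.
  by rewrite /cnbhd /cadj ab orbT.
Qed.

Lemma tail_card_ge1 (D : {set V}) :
  k + 2 <= r -> isolating adj k D -> 0 < #|[set x in D | block x == ord_max]|.
Proof.
move=> kr isoD; rewrite card_gt0; apply: contraTN isoD => /eqP tail_free; rewrite negbK.
have off_tail x : x \in D -> block x != q :> nat.
  move=> xD; apply/negP => /eqP xq; have xq' : block x == ord_max by apply/eqP/val_inj.
  by have := in_set0 x; rewrite -tail_free inE xD xq'.
have tail_off (c : 'I_(q + r)) : q < c -> inl c \notin closed_nbhd adj D.
  move=> qc; apply/closed_nbhdPn; split=> [|[c' | [i b]] dD /=].
  - by apply: contraTN qc => /off_tail; rewrite block_inl; lia.
  - by have := off_tail _ dD; rewrite block_inl /u_edge; lia.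
  - by have := ltn_ord i; lia.
have top : q + r - 1 < q + r by lia.
apply: (has_star_outsideI (v := inl (Ordinal top))
          (S := inl @: [set c : 'I_(q + r) | (c : nat) \in iota q.+1 k])).
- by apply: tail_off; rewrite /=; lia.
- by rewrite (mem_imset _ _ inl_inj) inE mem_iota /=; lia.
- rewrite (card_imset _ inl_inj) card_ord_in_seq ?size_iota ?iota_uniq //.
  by apply/allP => c; rewrite mem_iota; lia.
- rewrite disjoint_subset; apply/subsetP => _ /imsetP[c + ->].
  rewrite inE mem_iota => c_in; have qc : q < c by lia.
  exact: tail_off qc.
- by move=> _ /imsetP[c + ->]; rewrite inE mem_iota /= /u_edge; lia.
Qed.

Lemma isolating_card_ge (D : {set V}) :
  isolating adj k D -> 2 * q + (k + 2 <= r) <= #|D|.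
Proof.
move=> isoD; rewrite -sum1_card (partition_big block predT) //= big_ord_recr /=.
apply: leq_add.
  have -> : 2 * q = \sum_(j < q) 2 by rewrite sum_nat_const card_ord mulnC.
  apply: leq_sum => j _.
  by rewrite sum1dep_card; exact: block_card_ge2.
by case: (leqP (k + 2) r) => kr //; rewrite sum1dep_card; apply: tail_card_ge1.
Qed.

Definition isolating_witness : {set V} :=
  [set x : V | match x with
               | inl c => (c : nat) \in iota 0 q ++ nseq (k + 2 <= r) (q + r - 1)
               | inr (_, b) => (b : nat) \in [:: k + 1]
               end].

Local Notation W := isolating_witness.

Lemma card_isolating_witness : #|isolating_witness| = 2 * q + (k + 2 <= r).
Proof.
rewrite cards_sum.
have -> : [set c | inl c \in W] =
          [set c : 'I_(q + r) | (c : nat) \in iota 0 q ++ nseq (k + 2 <= r) (q + r - 1)].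
  by apply/setP => c; rewrite !inE.
have -> : [set p | inr p \in W] =
          setX [set: 'I_q] [set b : 'I_(2 * k + 2) | (b : nat) \in [:: k + 1]].
  by apply/setP => -[i b]; rewrite !inE.
rewrite cardsX cardsT card_ord !card_ord_in_seq //=.
- by rewrite size_cat size_iota size_nseq; lia.
- by rewrite andbT; lia.
- rewrite cat_uniq iota_uniq /=; case: leqP => //= kr; rewrite andbT orbF mem_iota; lia.
- by apply/allP => c; rewrite mem_cat mem_iota mem_nseq; lia.
Qed.

Lemma off_witness_inl c : inl c \notin closed_nbhd adj W -> (q < c) && (r <= k + 1).
Proof.
case/closed_nbhdPn; rewrite inE mem_cat mem_iota mem_nseq => c_off nadj.
have c_lt := ltn_ord c.
have c_ne : c != q :> nat.
  apply/eqP => cq; have q1 : q - 1 < q + r by lia.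
  have q1_in : inl (Ordinal q1) \in W by rewrite inE mem_cat mem_iota /=; lia.
  by have := nadj _ q1_in; rewrite /= /u_edge; lia.
have r_le : r <= k + 1.
  rewrite leqNgt; apply/negP => rk; have top : q + r - 1 < q + r by lia.
  have top_in : inl (Ordinal top) \in W by rewrite inE mem_cat mem_nseq /=; lia.
  by have := nadj _ top_in; rewrite /= /u_edge; lia.
by rewrite r_le andbT; lia.
Qed.

Lemma off_witness_inr i b :
  inr (i, b) \notin closed_nbhd adj W -> (b != 0 :> nat) && ~~ cnbhd k (k + 1) b.
Proof.
case/closed_nbhdPn; rewrite inE => b_off nadj.
have i_lt : i < q + r by have := ltn_ord i; lia.
have ui_in : inl (Ordinal i_lt) \in W by rewrite inE mem_cat mem_iota /= add0n ltn_ord.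
have k1 : k + 1 < 2 * k + 2 by lia.
have vk_in : inr (i, Ordinal k1) \in W by rewrite inE inE.
have := nadj _ ui_in; have := nadj _ vk_in; rewrite /= !eqxx /= => nk ->.
by rewrite /cnbhd /cadj negb_or nk andbT; move: b_off; rewrite inE.
Qed.

Lemma isolating_witness_isolating : isolating adj k W.
Proof.
apply: no_star_outside_small_nbhd => -[c | [i b]] v_off.
- have /andP[qc rk] := off_witness_inl v_off.
  pose L := [set c' : 'I_(q + r) | (c' : nat) \in iota q.+1 (r - 1)].
  apply: (@leq_trans #|inl @: L|).
    apply/subset_leq_card/subsetP => -[c' | [i b]]; rewrite inE => /andP[w_off].
      move=> _; apply: imset_f; have := off_witness_inl w_off.
      by rewrite inE mem_iota; have := ltn_ord c'; lia.
    by rewrite /=; have := ltn_ord i; lia.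
  rewrite (card_imset _ inl_inj); apply: (@leq_trans (size (iota q.+1 (r - 1)))).
    by apply: card_ord_le_size => c'; rewrite inE.
  by rewrite size_iota; lia.
- have /andP[b0 _] := off_witness_inr v_off.
  apply: leq_trans (Ck_off_antipodal_pair k_ge2).
  apply: leq_trans (leq_imset_card (fun b' => inr (i, b')) _).
  apply/subset_leq_card/subsetP => -[c | [i' b']]; rewrite inE => /andP[w_off].
    by rewrite /= (negbTE b0) andbF.
  move=> i_eq; have -> : i' = i by case/orP: i_eq => [/eqP[] | /andP[/eqP]].
  by apply/imsetP; exists b'; rewrite // inE; apply: off_witness_inr w_off.
Qed.

End BGraph.

Theorem lemma3 (k n : nat) :
  2 <= k -> 2 * k + 3 <= n ->
  iota_star (@Badj n k) k = (2 * n) %/ (2 * k + 3).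
Proof.
move=> k2 kn; have q_gt0 : 0 < Bq n k by rewrite divn_gt0 //; lia.
have -> : (2 * n) %/ (2 * k + 3) = 2 * Bq n k + (k + 2 <= Br n k).
  rewrite divn_double; last by lia.
  have -> : (2 * k + 3 <= 2 * (n %% (2 * k + 3))) = (k + 2 <= Br n k).
    by apply/idP/idP; rewrite /Br; lia.
  by [].
apply/eqP; rewrite eqn_leq; apply/andP; split.
  rewrite -(card_isolating_witness k2 q_gt0).
  exact/iota_star_le/isolating_witness_isolating.
apply: iota_star_ge => [|D]; last exact: isolating_card_ge.
by rewrite card_sum card_prod !card_ord; nia.
Qed.
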